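(* Let $G$ be an infinite supersoluble group with no elements of order $2$ (no involutions) such that every non-abelian subgroup $H$ of $G$ satisfies $C_G(H)\le H$. Then $G$ is abelian.
   Context: A group is supersoluble if it has a normal series (each term normal in the whole group) with cyclic factors. $C_G(H)$ denotes the centralizer of $H$ in $G$. *)

From Stdlib Require Import ZArith List.

Record group := Group {
  carrier :> Type;
  gmul : carrier -> carrier -> carrier;
  gone : carrier;
  ginv : carrier -> carrier;
  gmulA : forall x y z, gmul x (gmul y z) = gmul (gmul x y) z;
  gmul1l : forall x, gmul gone x = x;
  gmulVl : forall x, gmul (ginv x) x = gone
}.

Arguments gmul {g}.
Arguments gone {g}.
Arguments ginv {g}.

Fixpoint gpow_nat {G : group} (x : G) (n : nat) : G :=
  match n with O => gone | S n => gmul x (gpow_nat x n) end.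

Definition gpow {G : group} (x : G) (k : Z) : G :=
  match k with
  | Z0 => gone
  | Zpos p => gpow_nat x (Pos.to_nat p)
  | Zneg p => ginv (gpow_nat x (Pos.to_nat p))
  end.

Definition is_subgroup {G : group} (H : G -> Prop) : Prop :=
  H gone /\ (forall x y, H x -> H y -> H (gmul x y)) /\ (forall x, H x -> H (ginv x)).

Definition is_normal {G : group} (H : G -> Prop) : Prop :=
  is_subgroup H /\ forall g x, H x -> H (gmul (ginv g) (gmul x g)).

(* B/A is cyclic (A <= B): some g in B with every x in B equal to g^k * a, a in A *)
Definition cyclic_factor {G : group} (B A : G -> Prop) : Prop :=
  exists g, B g /\ forall x, B x -> exists (k : Z) (a : G), A a /\ x = gmul (gpow g k) a.

Definition supersoluble (G : group) : Prop :=
  exists (n : nat) (S : nat -> G -> Prop),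
    (forall x, S 0 x <-> x = gone) /\
    (forall x, S n x) /\
    (forall i, i <= n -> is_normal (S i)) /\
    (forall i, i < n -> (forall x, S i x -> S (Datatypes.S i) x) /\
                        cyclic_factor (S (Datatypes.S i)) (S i)).

Definition infinite_group (G : group) : Prop :=
  ~ exists l : list G, forall x : G, In x l.

Definition no_involutions (G : group) : Prop :=
  forall x : G, gmul x x = gone -> x = gone.

Definition abelian_group (G : group) : Prop :=
  forall x y : G, gmul x y = gmul y x.

Definition nonabelian_subgroup {G : group} (H : G -> Prop) : Prop :=
  is_subgroup H /\ exists x y, H x /\ H y /\ gmul x y <> gmul y x.

Definition centralizer_in {G : group} (H : G -> Prop) : Prop :=
  forall g : G, (forall h, H h -> gmul g h = gmul h g) -> H g.

From Stdlib Require Import ZArith List Lia Classical ClassicalEpsilon.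

(* Induction along the series 1 = S_0 <= ... <= S_n = G.  The centralizer condition gives three
   tools: a group with a homomorphism to Z that is non-zero on a central element is abelian; no
   element inverts a non-trivial element (involutions being excluded); and if [h, c] = z commutes
   with h and c then z has finite order.  With the last, some power of an element normalizing the series centralizes an abelian or finite term.
   If the top factor <g>S_(n-1)/S_(n-1) is infinite, projecting onto it is such a homomorphism.
   Otherwise S_(n-1) is infinite, hence abelian by induction, and g acts by +-1 on an infinite
   cyclic layer below: +1 yields a central element of non-zero weight in G, -1 yields an element
   inverted by g. *)

Lemma pigeonhole_nat m (f : nat -> nat) : (forall t, t <= m -> f t < m) ->
  exists t1 t2, t1 < t2 <= m /\ f t1 = f t2.
Proof.
  revert f; induction m as [|m IH]; intros f Hf.
  - specialize (Hf 0 (le_n 0)). lia.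
  - destruct (classic (exists t, t <= m /\ f t = f (S m))) as [[t [Ht E]]|Hnew].
    + exists t, (S m). split; [lia|auto].
    + assert (Hne : forall t, t <= m -> f t <> f (S m)) by (intros t Ht E; apply Hnew; eauto).
      set (f' := fun t => if f t <? f (S m) then f t else f t - 1).
      destruct (IH f') as [t1 [t2 [Ht E]]].
      { intros t Ht. unfold f'. pose proof (Hne t Ht). pose proof (Hf t ltac:(lia)).
        pose proof (Hf (S m) (le_n _)). destruct (Nat.ltb_spec (f t) (f (S m))); lia. }
      exists t1, t2. split; [lia|]. unfold f' in E.
      pose proof (Hne t1 ltac:(lia)). pose proof (Hne t2 ltac:(lia)).
      destruct (Nat.ltb_spec (f t1) (f (S m))); destruct (Nat.ltb_spec (f t2) (f (S m))); lia.
Qed.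

Lemma pigeonhole_rel m (R : nat -> nat -> Prop) :
  (forall t, t <= m -> exists r, r < m /\ R t r) ->
  exists t1 t2 r, t1 < t2 <= m /\ R t1 r /\ R t2 r.
Proof.
  intros HR.
  set (f := fun t => epsilon (inhabits 0) (fun r => t <= m -> r < m /\ R t r)).
  assert (Hf : forall t, t <= m -> f t < m /\ R t (f t)).
  { intros t Ht. unfold f. apply (epsilon_spec (inhabits 0) (fun r => t <= m -> r < m /\ R t r)); auto.
    destruct (HR t Ht) as [r Hr]. exists r. auto. }
  destruct (pigeonhole_nat m f) as [t1 [t2 [Ht E]]]; [intros t Ht; apply Hf; auto|].
  exists t1, t2, (f t1). split; auto. split; [apply Hf; lia|]. rewrite E. apply Hf. lia.
Qed.

Lemma pigeonhole_list {A : Type} (L : list A) (u : nat -> A) :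
  (forall t, t <= length L -> In (u t) L) ->
  exists t1 t2, t1 < t2 <= length L /\ u t1 = u t2.
Proof.
  intros Hu. destruct L as [|d L']; [destruct (Hu 0 (le_n 0))|].
  destruct (pigeonhole_rel (length (d :: L')) (fun t n => nth n (d :: L') d = u t))
    as [t1 [t2 [n [Ht [E1 E2]]]]].
  { intros t Ht. destruct (In_nth _ _ d (Hu t Ht)) as [n [Hn E]]. eauto. }
  exists t1, t2. split; auto. congruence.
Qed.

Open Scope Z_scope.

Section Groups.
Variable G : group.
Local Infix "**" := (@gmul G) (at level 40, left associativity).
(* Inside this section 1 denotes the identity of G; the integer 1 needs %Z outside arguments of type Z. *)
Local Notation "1" := (@gone G).
Local Notation inv := (@ginv G).

Lemma mulgA (x y z : G) : x ** (y ** z) = x ** y ** z.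
Proof. apply gmulA. Qed.
Lemma mul1g (x : G) : 1 ** x = x.
Proof. apply gmul1l. Qed.
Lemma mulVg (x : G) : inv x ** x = 1.
Proof. apply gmulVl. Qed.

Lemma mulgV (x : G) : x ** inv x = 1.
Proof.
  rewrite <- (mul1g (x ** inv x)), <- (mulVg (inv x)) at 1.
  rewrite <- mulgA, (mulgA (inv x) x (inv x)), mulVg, mul1g. apply mulVg.
Qed.
Lemma mulg1 (x : G) : x ** 1 = x.
Proof. rewrite <- (mulVg x), mulgA, mulgV, mul1g. reflexivity. Qed.
Lemma mulKg (x y : G) : inv x ** (x ** y) = y.
Proof. rewrite mulgA, mulVg, mul1g; auto. Qed.
Lemma mulKVg (x y : G) : x ** (inv x ** y) = y.
Proof. rewrite mulgA, mulgV, mul1g; auto. Qed.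
Lemma mulgK (x y : G) : y ** x ** inv x = y.
Proof. rewrite <- mulgA, mulgV, mulg1; auto. Qed.
Lemma mulgKV (x y : G) : y ** inv x ** x = y.
Proof. rewrite <- mulgA, mulVg, mulg1; auto. Qed.
Lemma mulgI (x y z : G) : x ** y = x ** z -> y = z.
Proof. intro E. rewrite <- (mulKg x y), E, mulKg; auto. Qed.
Lemma mulIg (x y z : G) : y ** x = z ** x -> y = z.
Proof. intro E. rewrite <- (mulgK x y), E, mulgK; auto. Qed.
Lemma invg_unique (x y : G) : x ** y = 1 -> y = inv x.
Proof. intro E. apply (mulgI x). rewrite E, mulgV; auto. Qed.
Lemma invgK (x : G) : inv (inv x) = x.
Proof. symmetry. apply invg_unique, mulVg. Qed.
Lemma invg1 : inv 1 = 1.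
Proof. symmetry. apply invg_unique, mul1g. Qed.
Lemma invMg (x y : G) : inv (x ** y) = inv y ** inv x.
Proof. symmetry. apply invg_unique. rewrite mulgA, <- (mulgA x y), mulgV, mulg1, mulgV; auto. Qed.

Lemma gpow_nat_comm (x : G) n : gpow_nat x n ** x = x ** gpow_nat x n.
Proof. induction n; simpl. - rewrite mul1g, mulg1; auto. - rewrite <- mulgA, IHn; auto. Qed.

Lemma gpow_of_nat (x : G) n : gpow x (Z.of_nat n) = gpow_nat x n.
Proof.
  destruct n; [reflexivity|]. unfold gpow. simpl Z.of_nat. cbv iota.
  rewrite (SuccNat2Pos.id_succ n : Pos.to_nat (PosDef.Pos.of_succ_nat n) = _). reflexivity.
Qed.
Lemma gpow_opp_nat (x : G) n : gpow x (- Z.of_nat n) = inv (gpow_nat x n).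
Proof.
  destruct n; [symmetry; apply invg1|]. unfold gpow. simpl Z.of_nat. simpl Z.opp. cbv iota.
  rewrite (SuccNat2Pos.id_succ n : Pos.to_nat (PosDef.Pos.of_succ_nat n) = _). reflexivity.
Qed.

Lemma gpow0 (x : G) : gpow x 0 = 1.
Proof. reflexivity. Qed.
Lemma gpow1 (x : G) : gpow x 1 = x.
Proof. apply mulg1. Qed.

Lemma gpow_succ (x : G) k : gpow x (Z.succ k) = x ** gpow x k.
Proof.
  destruct (Z_le_gt_dec 0 k).
  - rewrite <- (Z2Nat.id k), <- Nat2Z.inj_succ, !gpow_of_nat by lia. reflexivity.
  - replace k with (- Z.of_nat (S (Z.to_nat (- k - 1)))) by lia.
    replace (Z.succ _) with (- Z.of_nat (Z.to_nat (- k - 1))) by lia.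
    rewrite !gpow_opp_nat. simpl gpow_nat.
    rewrite <- gpow_nat_comm, invMg, mulgA, mulgV, mul1g; auto.
Qed.
Lemma gpow_pred (x : G) k : gpow x (Z.pred k) = inv x ** gpow x k.
Proof. rewrite <- (Z.succ_pred k) at 2. rewrite gpow_succ, mulKg; auto. Qed.

Lemma gpowD (x : G) a b : gpow x (a + b) = gpow x a ** gpow x b.
Proof.
  induction a using Z.peano_ind.
  - rewrite Z.add_0_l, gpow0, mul1g; auto.
  - rewrite Z.add_succ_l, !gpow_succ, IHa, mulgA; auto.
  - rewrite Z.add_pred_l, !gpow_pred, IHa, mulgA; auto.
Qed.
Lemma gpowN (x : G) a : gpow x (- a) = inv (gpow x a).
Proof. apply invg_unique. rewrite <- gpowD, Z.add_opp_diag_r. auto. Qed.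
Lemma gpowB (x : G) a b : gpow x (a - b) = gpow x a ** inv (gpow x b).
Proof. unfold Z.sub. rewrite gpowD, gpowN; auto. Qed.
Lemma gpow2 (x : G) : gpow x 2 = x ** x.
Proof. change 2 with (1 + 1). rewrite gpowD, gpow1; auto. Qed.

Lemma gpowC (x : G) a b : gpow x a ** gpow x b = gpow x b ** gpow x a.
Proof. rewrite <- !gpowD, Z.add_comm; auto. Qed.

Lemma gpowM (x : G) a b : gpow x (a * b) = gpow (gpow x a) b.
Proof.
  induction b using Z.peano_ind.
  - rewrite Z.mul_0_r; auto.
  - rewrite Z.mul_succ_r, gpowD, IHb, gpow_succ.
    rewrite <- (gpow1 (gpow x a)) at 2 3. apply gpowC.
  - rewrite Z.mul_pred_r, gpowB, IHb, gpow_pred.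
    replace (inv (gpow x a)) with (gpow (gpow x a) (-1)) by (change (-1) with (- (1)); rewrite gpowN, gpow1; auto).
    apply gpowC.
Qed.

Definition conjg (h x : G) : G := inv h ** (x ** h).

Lemma conjgM h x y : conjg h (x ** y) = conjg h x ** conjg h y.
Proof. unfold conjg. rewrite !mulgA, mulgK. auto. Qed.
Lemma conjg1 h : conjg h 1 = 1.
Proof. unfold conjg. rewrite mul1g, mulVg; auto. Qed.
Lemma conjgV h x : conjg h (inv x) = inv (conjg h x).
Proof. apply invg_unique. rewrite <- conjgM, mulgV, conjg1; auto. Qed.
Lemma conjg_gpow h x k : conjg h (gpow x k) = gpow (conjg h x) k.
Proof.
  induction k using Z.peano_ind.
  - apply conjg1.
  - rewrite !gpow_succ, conjgM, IHk; auto.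
  - rewrite !gpow_pred, conjgM, IHk, conjgV; auto.
Qed.
Lemma conjg_mul h k x : conjg (h ** k) x = conjg k (conjg h x).
Proof. unfold conjg. rewrite invMg, !mulgA. auto. Qed.
Lemma conj1g x : conjg 1 x = x.
Proof. unfold conjg. rewrite invg1, mul1g, mulg1; auto. Qed.
Lemma conjgKV h x : conjg h (conjg (inv h) x) = x.
Proof. rewrite <- conjg_mul, mulVg, conj1g; auto. Qed.
Lemma conjgVK h x : conjg (inv h) (conjg h x) = x.
Proof. rewrite <- conjg_mul, mulgV, conj1g; auto. Qed.
Lemma conjg_inj h x y : conjg h x = conjg h y -> x = y.
Proof. intro E. rewrite <- (conjgVK h x), E, conjgVK; auto. Qed.
Lemma mul_conjg x h : x ** h = h ** conjg h x.
Proof. unfold conjg. rewrite mulKVg; auto. Qed.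
Lemma conjg_gpowD h a b x : conjg (gpow h b) (conjg (gpow h a) x) = conjg (gpow h (a + b)) x.
Proof. rewrite gpowD, conjg_mul; auto. Qed.
Lemma mulg_gpow_conj h k a l b :
  gpow h k ** a ** (gpow h l ** b) = gpow h (k + l) ** (conjg (gpow h l) a ** b).
Proof. rewrite <- !mulgA, (mulgA a (gpow h l) b), (mul_conjg a (gpow h l)), gpowD, <- !mulgA. auto. Qed.

Definition commute (x y : G) := x ** y = y ** x.

Lemma conjg_fixP h x : conjg h x = x <-> commute h x.
Proof.
  unfold conjg, commute. split; intro E.
  - rewrite <- E at 1. rewrite mulKVg; auto.
  - rewrite <- E, mulKg; auto.
Qed.

Lemma commute_refl x : commute x x.
Proof. reflexivity. Qed.
Lemma commute_sym x y : commute x y -> commute y x.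
Proof. unfold commute; auto. Qed.
Lemma commute1 x : commute x 1.
Proof. unfold commute; rewrite mul1g, mulg1; auto. Qed.
Lemma commute_mulr x y z : commute x y -> commute x z -> commute x (y ** z).
Proof. unfold commute; intros E1 E2. rewrite mulgA, E1, <- mulgA, E2, mulgA; auto. Qed.
Lemma commute_invr x y : commute x y -> commute x (inv y).
Proof.
  unfold commute; intros E. apply (mulgI y).
  rewrite mulgA, <- E, <- mulgA, mulgV, mulg1, mulKVg. auto.
Qed.
Lemma commute_gpowl x y a : commute x y -> commute (gpow x a) y.
Proof.
  intros E. apply commute_sym, conjg_fixP. apply commute_sym, conjg_fixP in E.
  rewrite conjg_gpow, E; auto.
Qed.
Lemma commute_gpowr x y a : commute x y -> commute x (gpow y a).
Proof. intro E. apply commute_sym, commute_gpowl, commute_sym; auto. Qed.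
Lemma commute_gpow x y a b : commute x y -> commute (gpow x a) (gpow y b).
Proof. intro E. apply commute_gpowl, commute_gpowr; auto. Qed.

Lemma gpowMn x y k : commute x y -> gpow (x ** y) k = gpow x k ** gpow y k.
Proof.
  intro E. induction k using Z.peano_ind.
  - rewrite !gpow0, mul1g; auto.
  - rewrite !gpow_succ, IHk, <- !mulgA. f_equal. rewrite !mulgA. f_equal.
    symmetry. apply commute_gpowl; auto.
  - rewrite !gpow_pred, IHk, invMg.
    assert (E1 : inv y ** inv x = inv x ** inv y) by (rewrite <- !invMg; f_equal; apply E).
    assert (E2 : commute (inv y) (gpow x k))
      by (apply commute_sym, commute_invr, commute_gpowl; auto).
    rewrite E1, <- (mulgA (inv x) (inv y)), (mulgA (inv y)), E2, !mulgA. auto.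
Qed.
Lemma gpow1n k : gpow 1 k = 1.
Proof.
  induction k using Z.peano_ind; auto.
  - rewrite gpow_succ, IHk, mul1g; auto.
  - rewrite gpow_pred, IHk, invg1, mul1g; auto.
Qed.
Lemma gpowVn x k : gpow (inv x) k = inv (gpow x k).
Proof.
  apply invg_unique. rewrite <- gpowMn, mulgV, gpow1n; auto.
  unfold commute. rewrite mulVg, mulgV; auto.
Qed.

Lemma subgroup_gpow (H : G -> Prop) x k : is_subgroup H -> H x -> H (gpow x k).
Proof.
  intros [H1 [HM HV]] Hx. induction k using Z.peano_ind.
  - apply H1.
  - rewrite gpow_succ; auto.
  - rewrite gpow_pred; auto.
Qed.

Definition abelian_on (P : G -> Prop) : Prop := forall x y, P x -> P y -> commute x y.

Definition finite_set (P : G -> Prop) : Prop := exists l : list G, forall x, P x -> In x l.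

Lemma conj_orbit_finite_commute h c (L : list G) :
  (forall t : nat, In (conjg (gpow h (Z.of_nat t)) c) L) -> exists e, e > 0 /\ commute (gpow h e) c.
Proof.
  intros HL.
  destruct (pigeonhole_list L (fun t => conjg (gpow h (Z.of_nat t)) c)) as [t1 [t2 [Ht E]]]; auto.
  exists (Z.of_nat t2 - Z.of_nat t1). split; [lia|].
  apply conjg_fixP. apply (f_equal (conjg (gpow h (- Z.of_nat t1)))) in E.
  rewrite !conjg_gpowD, Z.add_opp_diag_r, gpow0, conj1g in E. symmetry. exact E.
Qed.

Definition hom_Z (Q : G -> Prop) (phi : G -> Z) : Prop :=
  forall x y, Q x -> Q y -> phi (x ** y) = phi x + phi y.

Lemma hom_Z_1 Q phi : is_subgroup Q -> hom_Z Q phi -> phi 1 = 0.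
Proof. intros [Q1 _] Hp. pose proof (Hp 1 1 Q1 Q1) as E. rewrite mul1g in E. lia. Qed.
Lemma hom_Z_inv Q phi x : is_subgroup Q -> hom_Z Q phi -> Q x -> phi (inv x) = - phi x.
Proof.
  intros HQ Hp Hx. pose proof (hom_Z_1 Q phi HQ Hp). destruct HQ as [_ [_ QV]].
  pose proof (Hp (inv x) x (QV x Hx) Hx) as E. rewrite mulVg in E. lia.
Qed.
Lemma hom_Z_gpow Q phi x k : is_subgroup Q -> hom_Z Q phi -> Q x -> phi (gpow x k) = k * phi x.
Proof.
  intros HQ Hp Hx. pose proof (hom_Z_1 Q phi HQ Hp).
  pose proof (subgroup_gpow Q x) as Qpow. pose proof HQ as [_ [_ QV]].
  induction k using Z.peano_ind.
  - rewrite gpow0; auto.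
  - rewrite gpow_succ, Hp, IHk; auto. lia.
  - rewrite gpow_pred, Hp, IHk, (hom_Z_inv Q); auto. lia.
Qed.

Lemma commute_central_mul x y a b : commute a b -> commute a y -> commute b x ->
  commute (x ** a) (y ** b) -> commute x y.
Proof.
  unfold commute; intros Cab Cay Cbx E.
  assert (E1 : x ** a ** (y ** b) = x ** y ** (a ** b)).
  { rewrite <- !mulgA. f_equal. rewrite mulgA, Cay, <- mulgA. auto. }
  assert (E2 : y ** b ** (x ** a) = y ** x ** (a ** b)).
  { rewrite <- !mulgA. f_equal. rewrite mulgA, Cbx, <- mulgA, Cab. auto. }
  rewrite E1, E2 in E. apply mulIg in E. exact E.
Qed.

Lemma not_divide_succ_square (v : Z) : v <> 0 -> ~ (1 + v * v | v).
Proof.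
  intros Hv [t Ht]. destruct (Z.eq_dec t 0); [subst t; lia|].
  assert (v * v = t * t * ((1 + v * v) * (1 + v * v))) by (rewrite Ht at 1 2; ring).
  nia.
Qed.

(* Unlike [supersoluble], normality is only required with respect to the top term S n. *)
Definition series (S : nat -> G -> Prop) (n : nat) : Prop :=
  (forall x, S 0%nat x <-> x = 1) /\
  (forall i, (i <= n)%nat -> is_subgroup (S i)) /\
  (forall i, (i <= n)%nat -> forall p x, S n p -> S i x -> S i (conjg p x)) /\
  (forall i, (i < n)%nat -> (forall x, S i x -> S (Datatypes.S i) x) /\
       cyclic_factor (S (Datatypes.S i)) (S i)).

Lemma series_incr S n i j x : series S n -> (i <= j <= n)%nat -> S i x -> S j x.
Proof.
  intros [_ [_ [_ Hs]]] Hij. induction j.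
  - replace i with 0%nat by lia. auto.
  - intros Hx. destruct (Nat.eq_dec i (Datatypes.S j)) as [->|]; auto.
    apply (Hs j); [lia|]. apply IHj; auto. lia.
Qed.

Lemma series_restrict S n : series S (Datatypes.S n) -> series S n.
Proof.
  intros Ser. pose proof Ser as [S0 [Ssub [Snorm Sfac]]].
  split; [auto|split; [|split]].
  - intros; apply Ssub; lia.
  - intros i Hi p x Hp Hx. apply Snorm; auto. apply (proj1 (Sfac n ltac:(lia))); auto.
  - intros i Hi. apply Sfac. lia.
Qed.

Lemma series_base_finite S : (forall x, S 0%nat x <-> x = 1) -> finite_set (S 0%nat).
Proof. intro H. exists (1 :: nil). intros x Hx. apply H in Hx. subst. left; auto. Qed.

Definition generates_mod (P B : G -> Prop) (c : G) : Prop :=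
  forall x, P x -> exists k b, B b /\ x = gpow c k ** b.

Lemma finite_cyclic_extension (B P : G -> Prop) c m : is_subgroup B -> finite_set B ->
  generates_mod P B c -> m > 0 -> B (gpow c m) -> finite_set P.
Proof.
  intros HB [LB HLB] Gen Hm Hcm.
  exists (flat_map (fun r => map (fun b => gpow c (Z.of_nat r) ** b) LB) (seq 0 (Z.to_nat m))).
  intros x Hx. destruct (Gen x Hx) as [k [b [Hb E]]]. subst x.
  apply in_flat_map. exists (Z.to_nat (k mod m)). split.
  - apply in_seq. pose proof (Z.mod_pos_bound k m ltac:(lia)). lia.
  - apply in_map_iff. exists (gpow (gpow c m) (k / m) ** b). split.
    + rewrite Z2Nat.id by (apply Z.mod_pos_bound; lia). rewrite mulgA, <- gpowM, <- gpowD.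
      f_equal. f_equal. pose proof (Z.div_mod k m ltac:(lia)). lia.
    + apply HLB. pose proof HB as [_ [HM _]]. apply HM; auto. apply subgroup_gpow; auto.
Qed.

Definition torsionfree_mod (B : G -> Prop) (c : G) : Prop := forall k, k <> 0 -> ~ B (gpow c k).

Lemma torsionfree_modP (B : G -> Prop) c : is_subgroup B ->
  ~ (exists m, m > 0 /\ B (gpow c m)) -> torsionfree_mod B c.
Proof.
  intros [_ [_ BV]] NoPow k Hk Hck. apply NoPow. destruct (Z_lt_le_dec k 0).
  - exists (- k). split; [lia|]. rewrite gpowN. auto.
  - exists k. split; [lia|auto].
Qed.

Lemma coset_exponent_unique (B : G -> Prop) c k a k' a' : is_subgroup B -> torsionfree_mod B c ->
  B a -> B a' -> gpow c k ** a = gpow c k' ** a' -> k = k'.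
Proof.
  intros [B1 [BM BV]] Hc Ha Ha' E. apply NNPP. intro Hne. apply (Hc (- k' + k)); [lia|].
  replace (gpow c (- k' + k)) with (a' ** inv a); auto.
  rewrite gpowD, gpowN. apply (mulIg a). rewrite mulgKV, <- mulgA, E, mulKg. auto.
Qed.

Definition coset_exponent (B : G -> Prop) (c x : G) : Z :=
  epsilon (inhabits 0) (fun k => exists b, B b /\ x = gpow c k ** b).

Lemma coset_exponent_eq (B : G -> Prop) c k a : is_subgroup B -> torsionfree_mod B c -> B a ->
  coset_exponent B c (gpow c k ** a) = k.
Proof.
  intros HB Hc Ha. unfold coset_exponent.
  destruct (epsilon_spec (inhabits 0) (fun k0 => exists a0, B a0 /\ gpow c k ** a = gpow c k0 ** a0))
    as [a0 [Ha0 E]]; eauto.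
  symmetry. apply (coset_exponent_unique B c k a _ a0); auto.
Qed.

Lemma coset_exponent_hom (B P : G -> Prop) c : is_subgroup B -> torsionfree_mod B c ->
  (forall l b, B b -> B (conjg (gpow c l) b)) ->
  generates_mod P B c -> hom_Z P (coset_exponent B c).
Proof.
  intros HB Hc Hn Gen x y Hx Hy. pose proof HB as [_ [BM _]].
  destruct (Gen x Hx) as [k [a [Ha ->]]]. destruct (Gen y Hy) as [l [b [Hb ->]]].
  rewrite mulg_gpow_conj, !coset_exponent_eq; auto.
Qed.

Lemma infinite_cyclic_layer S N : series S N -> abelian_on (S N) -> ~ finite_set (S N) ->
  exists j c M, (j < N)%nat /\ S (Datatypes.S j) c /\
    generates_mod (S (Datatypes.S j)) (S j) c /\
    torsionfree_mod (S j) c /\ M > 0 /\ (forall x, S N x -> S (Datatypes.S j) (gpow x M)).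
Proof.
  intros Ser Hab Hinf. pose proof Ser as [S0 [Ssub [_ Sfac]]].
  enough (H : forall N', (N' <= N)%nat -> finite_set (S N') \/
    exists j c M, (j < N')%nat /\ S (Datatypes.S j) c /\
    generates_mod (S (Datatypes.S j)) (S j) c /\
    torsionfree_mod (S j) c /\ M > 0 /\ (forall x, S N' x -> S (Datatypes.S j) (gpow x M))).
  { destruct (H N (le_n _)) as [F|[j [c [M R]]]]; [contradiction|]. exists j, c, M. tauto. }
  induction N' as [|N' IH]; intro HN'; [left; apply series_base_finite; auto|].
  destruct (Sfac N' ltac:(lia)) as [Sinc [c' [Hc' Gen']]].
  assert (SN' : is_subgroup (S N')) by (apply Ssub; lia).
  destruct (classic (exists m, m > 0 /\ S N' (gpow c' m))) as [[m [Hm Hcm]]|Hno].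
  - destruct (IH ltac:(lia)) as [F|[j [c [M [Hj [Hc [Gen [Inf [HM HX]]]]]]]]].
    + left. apply (finite_cyclic_extension (S N') _ c' m); auto.
    + right. exists j, c, (m * M). do 4 (split; auto). split; [nia|].
      intros x Hx. rewrite gpowM. apply HX.
      destruct (Gen' x Hx) as [k [b [Hb ->]]].
      assert (SNn : forall y, S (Datatypes.S N') y -> S N y) by (intros; apply (series_incr S N (Datatypes.S N') N); auto).
      pose proof SN' as [_ [SM _]].
      rewrite gpowMn by (apply Hab; apply SNn; [apply subgroup_gpow; [apply Ssub; lia|auto] | apply Sinc; auto]).
      apply SM; [|apply subgroup_gpow; auto].
      rewrite <- gpowM, Z.mul_comm, gpowM. apply subgroup_gpow; auto.
  - right. exists N', c', 1%Z. do 3 (split; auto). split; [apply torsionfree_modP; auto|].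
    split; [lia|]. intros x Hx. rewrite gpow1. auto.
Qed.

Lemma coset_exponent_conjg_scale (B P : G -> Prop) c q : is_subgroup B -> torsionfree_mod B c ->
  generates_mod P B c -> P c ->
  (forall b, B b -> commute c b) -> (forall b, B b -> B (conjg q b)) -> (forall x, P x -> P (conjg q x)) ->
  exists e, forall y, P y -> coset_exponent B c (conjg q y) = e * coset_exponent B c y.
Proof.
  intros HB Hc Gen Pc Cc HqB HqP. pose proof HB as [_ [BM _]].
  destruct (Gen _ (HqP c Pc)) as [e [s [Hs Es]]]. exists e. intros y Hy.
  destruct (Gen y Hy) as [k [b [Hb ->]]].
  rewrite conjgM, conjg_gpow, Es, gpowMn, <- gpowM, <- mulgA, !coset_exponent_eq; auto.
  - apply BM; auto. apply subgroup_gpow; auto.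
  - apply commute_gpowl; auto.
Qed.

Section Centralizer_condition.
Hypothesis no_inv : no_involutions G.
Hypothesis self_centralizing : forall H : G -> Prop, nonabelian_subgroup H -> centralizer_in H.

(* If x, y did not commute, neither would x z^(v phi x), y z^(v phi y), which lie in the
   subgroup where phi is divisible by 1 + v^2 (v = phi z); that subgroup would then have to
   contain z. *)
Lemma abelian_of_central_hom_Z (Q : G -> Prop) (phi : G -> Z) (z : G) :
  is_subgroup Q -> hom_Z Q phi -> Q z -> (forall x, Q x -> commute z x) -> phi z <> 0 ->
  abelian_on Q.
Proof.
  intros HQ Hp Qz Zc Hv x y Qx Qy.
  destruct (classic (commute x y)) as [|Hxy]; auto. exfalso.
  set (v := phi z) in *. set (q := 1 + v * v).
  set (H := fun w => Q w /\ (q | phi w)).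
  pose proof (hom_Z_1 Q phi HQ Hp) as P1. pose proof HQ as [Q1 [QM QV]].
  pose proof (subgroup_gpow Q z) as Qzk.
  assert (HS : is_subgroup H).
  { split; [|split].
    - split; auto. rewrite P1. apply Z.divide_0_r.
    - intros a b [Qa Da] [Qb Db]. split; auto. rewrite Hp; auto. apply Z.divide_add_r; auto.
    - intros a [Qa Da]. split; auto. rewrite (hom_Z_inv Q); auto. apply Z.divide_opp_r; auto. }
  assert (Hshift : forall w, Q w -> H (w ** gpow z (phi w * v))).
  { intros w Qw. split; auto. rewrite Hp, (hom_Z_gpow Q); auto. exists (phi w). unfold q, v; ring. }
  assert (HN : nonabelian_subgroup H).
  { split; auto. exists (x ** gpow z (phi x * v)), (y ** gpow z (phi y * v)).
    do 2 (split; auto). intro E. apply Hxy.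
    apply (commute_central_mul _ _ _ _ (commute_gpow _ _ _ _ (commute_refl z))) in E; auto;
      apply commute_gpowl; auto. }
  assert (Hz : H z) by (apply (self_centralizing H HN); intros h [Qh _]; apply Zc; auto).
  destruct Hz as [_ Dz]. apply (not_divide_succ_square v); auto.
Qed.

Lemma invg_fix_eq1 x : inv x = x -> x = 1.
Proof. intro E. apply no_inv. rewrite <- E at 1. apply mulVg. Qed.

Section Inverting_conjugation.
Variables g a : G.
Hypothesis a_nontrivial : a <> 1.
Hypothesis g_inverts_a : conjg g a = inv a.

Lemma conjg_gpow_inverting k i :
  conjg (gpow g (2 * k)) (gpow a i) = gpow a i /\
  conjg (gpow g (2 * k + 1)) (gpow a i) = gpow a (- i).
Proof.
  assert (C2 : commute (gpow g 2) a).
  { apply conjg_fixP. rewrite gpow2, conjg_mul, g_inverts_a, conjgV, g_inverts_a, invgK; auto. }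
  assert (Even : conjg (gpow g (2 * k)) (gpow a i) = gpow a i).
  { apply conjg_fixP. rewrite gpowM. apply commute_gpow; auto. }
  split; auto.
  rewrite gpowD, conjg_mul, Even, gpow1, conjg_gpow, g_inverts_a, gpowVn, gpowN; auto.
Qed.

Lemma inverting_gpow_eq1 m : gpow g m = 1 -> m = 0.
Proof.
  assert (D : forall n : nat, gpow g (Z.of_nat n) = 1 -> n = 0%nat).
  { intro n. induction n as [n IH] using (well_founded_induction lt_wf). intros E.
    destruct (Nat.eq_dec n 0) as [|Hn]; auto.
    destruct (Z.Even_or_Odd (Z.of_nat n)) as [[k Hk]|[k Hk]].
    - rewrite Hk, Z.mul_comm, gpowM, gpow2 in E. apply no_inv in E.
      assert (Z.to_nat k = 0%nat) by (apply IH; [lia|rewrite Z2Nat.id by lia; auto]). lia.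
    - exfalso. pose proof (proj2 (conjg_gpow_inverting k 1)) as F.
      rewrite <- Hk, E, conj1g, gpowN, gpow1 in F.
      apply a_nontrivial, invg_fix_eq1. auto. }
  intros E. destruct (Z_lt_le_dec m 0).
  - assert (Z.to_nat (- m) = 0%nat); [|lia].
    apply D. rewrite Z2Nat.id by lia. rewrite gpowN, E, invg1; auto.
  - assert (Z.to_nat m = 0%nat); [|lia]. apply D. rewrite Z2Nat.id by lia. auto.
Qed.

Lemma inverting_gpow_eq m i : gpow g m = gpow a i -> m = 0.
Proof.
  intros E. apply inverting_gpow_eq1. rewrite E. apply invg_fix_eq1.
  rewrite <- gpowN, <- (proj2 (conjg_gpow_inverting 0 i)).
  change (2 * 0 + 1)%Z with 1%Z. rewrite gpow1, <- E.
  apply conjg_fixP. rewrite <- (gpow1 g) at 1. apply gpowC.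
Qed.

Lemma conjg_gpow6_inverting j i :
  conjg (gpow g (6 * j)) (gpow a i) = gpow a i /\ conjg (gpow g (6 * j + 3)) (gpow a i) = gpow a (- i).
Proof.
  replace (6 * j) with (2 * (3 * j)) by ring.
  replace (2 * (3 * j) + 3) with (2 * (3 * j + 1) + 1) by ring.
  split; apply conjg_gpow_inverting.
Qed.

Definition inverting_subgroup (x : G) : Prop :=
  exists j i, x = gpow g (6 * j) ** gpow a i \/ x = gpow g (6 * j + 3) ** gpow a i.

Lemma inverting_subgroup_subgroup : is_subgroup inverting_subgroup.
Proof.
  split; [|split].
  - exists 0, 0. left. rewrite !gpow0, mul1g. auto.
  - intros x y [j [i Hx]] [j' [i' Hy]].
    destruct Hx as [->| ->]; destruct Hy as [->| ->]; rewrite mulg_gpow_conj.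
    + exists (j + j'), (i + i'). left. rewrite (proj1 (conjg_gpow6_inverting _ _)), <- gpowD. f_equal. f_equal. ring.
    + exists (j + j'), (- i + i'). right. rewrite (proj2 (conjg_gpow6_inverting _ _)), <- gpowD. f_equal. f_equal. ring.
    + exists (j + j'), (i + i'). right. rewrite (proj1 (conjg_gpow6_inverting _ _)), <- gpowD. f_equal. f_equal. ring.
    + exists (j + j' + 1), (- i + i'). left. rewrite (proj2 (conjg_gpow6_inverting _ _)), <- gpowD. f_equal. f_equal. ring.
  - intros x [j [i [->| ->]]]; rewrite invMg, mul_conjg, <- !gpowN.
    + exists (- j), (- i). left. replace (- (6 * j)) with (6 * (- j)) by ring.
      rewrite (proj1 (conjg_gpow6_inverting _ _)). auto.
    + exists (- j - 1), i. right. replace (- (6 * j + 3)) with (6 * (- j - 1) + 3) by ring.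
      rewrite (proj2 (conjg_gpow6_inverting _ _)), Z.opp_involutive. auto.
Qed.

(* <g^3, a> is non-abelian and centralized by g^2, hence would have to contain g^2. *)
Lemma inverting_conjugation_absurd : False.
Proof.
  assert (HN : nonabelian_subgroup inverting_subgroup).
  { split; [apply inverting_subgroup_subgroup|]. exists a, (gpow g 3). split; [|split].
    - exists 0, 1%Z. left. rewrite gpow0, mul1g, gpow1. auto.
    - exists 0, 0. right. rewrite gpow0, mulg1. auto.
    - intro E. assert (C3 : conjg (gpow g 3) a = inv a).
      { rewrite <- (gpow1 a), <- gpowN. apply (conjg_gpow6_inverting 0). }
      rewrite mul_conjg, C3 in E. apply mulgI in E. apply a_nontrivial, invg_fix_eq1. auto. }
  assert (Hg2 : inverting_subgroup (gpow g 2)).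
  { apply (self_centralizing _ HN). intros h [j [i [->| ->]]]; apply commute_mulr;
      try (apply commute_gpow, commute_refl);
      apply conjg_fixP; rewrite <- (Z.mul_1_r 2); apply conjg_gpow_inverting. }
  destruct Hg2 as [j [i [E|E]]];
    [assert (- (6 * j) + 2 = 0) | assert (- (6 * j + 3) + 2 = 0)]; try lia;
    apply (inverting_gpow_eq _ i); rewrite gpowD, gpowN, E, mulKg; auto.
Qed.
End Inverting_conjugation.

Section Heisenberg.
Variables h c z : G.
Hypothesis conj_h_c : conjg h c = c ** z.
Hypothesis commute_h_z : commute h z.
Hypothesis commute_c_z : commute c z.

Lemma conjg_heisenberg a b : conjg (gpow h a) (gpow c b) = gpow c b ** gpow z (a * b).
Proof.
  assert (Hc : forall b, conjg h (gpow c b) = gpow c b ** gpow z b).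
  { intro. rewrite conjg_gpow, conj_h_c, gpowMn; auto. }
  assert (Hz : forall k e, conjg (gpow h k) (gpow z e) = gpow z e).
  { intros. apply conjg_fixP, commute_gpow; auto. }
  assert (Hc' : conjg (inv h) (gpow c b) = gpow c b ** gpow z (- b)).
  { assert (Hz1 : forall e, conjg h (gpow z e) = gpow z e) by (intro; apply conjg_fixP, commute_gpowr; auto).
    apply (conjg_inj h). rewrite conjgKV, conjgM, Hc, Hz1, <- mulgA, <- gpowD.
    rewrite Z.add_opp_diag_r, gpow0, mulg1. auto. }
  induction a using Z.peano_ind.
  - rewrite gpow0, conj1g, Z.mul_0_l, gpow0, mulg1. auto.
  - rewrite gpow_succ, conjg_mul, Hc, conjgM, IHa, Hz, <- mulgA, <- gpowD.
    f_equal. f_equal. ring.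
  - rewrite gpow_pred, conjg_mul, Hc', conjgM, IHa, Hz, <- mulgA, <- gpowD.
    f_equal. f_equal. rewrite <- Z.sub_1_r. ring.
Qed.

Definition heis_word a b e := gpow h a ** gpow c b ** gpow z e.

Lemma heis_wordM a b e a' b' e' :
  heis_word a b e ** heis_word a' b' e' = heis_word (a + a') (b + b') (e + e' + a' * b).
Proof.
  unfold heis_word.
  assert (Zh : forall k e X, gpow z e ** (gpow h k ** X) = gpow h k ** (gpow z e ** X)).
  { intros. rewrite !mulgA. f_equal. apply commute_gpow, commute_sym; auto. }
  assert (Zc : forall k e X, gpow z e ** (gpow c k ** X) = gpow c k ** (gpow z e ** X)).
  { intros. rewrite !mulgA. f_equal. apply commute_gpow, commute_sym; auto. }
  assert (Ch : forall a b X, gpow c b ** (gpow h a ** X) = gpow h a ** (gpow c b ** (gpow z (a * b) ** X))).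
  { intros. rewrite !mulgA. f_equal. rewrite mul_conjg, conjg_heisenberg, mulgA. auto. }
  rewrite <- !mulgA, Zh, Zc, Ch, Zc.
  replace (e + e' + a' * b) with (a' * b + (e + e')) by ring.
  rewrite !gpowD, <- !mulgA. auto.
Qed.

Lemma heis_word0 : heis_word 0 0 0 = 1.
Proof. unfold heis_word. rewrite !gpow0, !mul1g. auto. Qed.

Lemma heis_wordV a b e : inv (heis_word a b e) = heis_word (- a) (- b) (- e + a * b).
Proof. symmetry. apply invg_unique. rewrite heis_wordM, <- heis_word0. f_equal; ring. Qed.

Lemma heis_word_commute a b e a' b' e' : (forall k, gpow z k = 1 -> k = 0) ->
  commute (heis_word a b e) (heis_word a' b' e') -> a' * b = a * b'.
Proof.
  unfold commute. intros Zfree E. rewrite !heis_wordM in E.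
  rewrite (Z.add_comm a'), (Z.add_comm b') in E. unfold heis_word in E. apply mulgI in E.
  assert (gpow z (e + e' + a' * b - (e' + e + a * b')) = 1) as Ez by (rewrite gpowB, E, mulgV; auto).
  apply Zfree in Ez. lia.
Qed.

(* <h^2, c^2, z^4> is non-abelian and centralized by z, which it does not contain unless
   z has finite order. *)
Lemma heisenberg_center_torsion : exists k, k <> 0 /\ gpow z k = 1.
Proof.
  apply NNPP. intro Hz.
  assert (Zfree : forall k, gpow z k = 1 -> k = 0) by (intros k Ek; apply NNPP; eauto).
  set (H := fun x => exists a b e, x = heis_word (2 * a) (2 * b) (4 * e)).
  assert (HS : is_subgroup H).
  { split; [|split].
    - exists 0, 0, 0. rewrite <- heis_word0. auto.
    - intros x y [a [b [e ->]]] [a' [b' [e' ->]]]. rewrite heis_wordM.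
      exists (a + a'), (b + b'), (e + e' + a' * b). f_equal; ring.
    - intros x [a [b [e ->]]]. rewrite heis_wordV.
      exists (- a), (- b), (- e + a * b). f_equal; ring. }
  assert (HN : nonabelian_subgroup H).
  { split; auto. exists (heis_word 2 0 0), (heis_word 0 2 0). split; [|split].
    - exists 1%Z, 0, 0. auto.
    - exists 0, 1%Z, 0. auto.
    - intro E. apply heis_word_commute in E; auto. lia. }
  assert (Zc : forall a b e, commute (heis_word 0 0 1) (heis_word a b e)).
  { intros. unfold commute. rewrite !heis_wordM. f_equal; ring. }
  destruct (self_centralizing H HN (heis_word 0 0 1)) as [a [b [e E]]].
  { intros x [a [b [e ->]]]. apply Zc. }
  pose proof (Zc 0 1%Z 0) as Ca. pose proof (Zc 1%Z 0 0) as Cb. rewrite E in Ca, Cb.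
  apply heis_word_commute in Ca; apply heis_word_commute in Cb; auto.
  replace (2 * a) with 0 in E by lia. replace (2 * b) with 0 in E by lia.
  unfold heis_word in E. apply mulgI in E.
  assert (gpow z (1 - 4 * e) = 1) as Ez by (rewrite gpowB, E, mulgV; auto).
  apply Zfree in Ez. lia.
Qed.
End Heisenberg.

Lemma commute_of_conj_shift h c b t : commute h b -> commute c b -> t <> 0 ->
  conjg (gpow h t) c = c ** b -> exists e, e > 0 /\ commute (gpow h e) c.
Proof.
  intros Chb Ccb Ht E.
  destruct (heisenberg_center_torsion (gpow h t) c b E (commute_gpowl _ _ _ Chb) Ccb) as [k [Hk Ek]].
  assert (C : commute (gpow h (t * k)) c).
  { apply conjg_fixP. rewrite gpowM, <- (gpow1 c) at 1.
    rewrite (conjg_heisenberg (gpow h t) c b E (commute_gpowl _ _ _ Chb) Ccb), Z.mul_1_r, Ek, gpow1, mulg1.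
    auto. }
  destruct (Z_le_gt_dec 0 (t * k)).
  - exists (t * k). split; [nia|auto].
  - exists (- (t * k)). split; [lia|].
    replace (- (t * k)) with (t * k * -1) by ring. rewrite gpowM. apply commute_gpowl. auto.
Qed.

Section Cyclic_layer.
Variables (B : G -> Prop) (c h : G).
Hypothesis B_subgroup : is_subgroup B.
Hypothesis h_centralizes_B : forall b, B b -> commute h b.
Hypothesis c_centralizes_B : forall b, B b -> commute c b.
Hypothesis conjg_layer : forall t, exists k b, B b /\ conjg (gpow h t) c = gpow c k ** b.

Lemma conjg_layer_fix t b : B b -> conjg (gpow h t) b = b.
Proof. intro Hb. apply conjg_fixP, commute_gpowl; auto. Qed.

Lemma conjg_layer_fix1 b : B b -> conjg h b = b.
Proof. intro Hb. apply conjg_fixP; auto. Qed.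

(* Pigeonhole on the exponents of c modulo m gives c^(h^t) = c b0 with b0 in B. *)
Lemma layer_commute_torsion m : m > 0 -> B (gpow c m) -> exists e, e > 0 /\ commute (gpow h e) c.
Proof.
  intros Hm Hcm. pose proof B_subgroup as [_ [BM BV]].
  destruct (pigeonhole_rel (Z.to_nat m) (fun t r => exists k b, B b /\
      conjg (gpow h (Z.of_nat t)) c = gpow c k ** b /\ r = Z.to_nat (k mod m)))
    as [t1 [t2 [r [Ht [[k1 [b1 [Hb1 [E1 R1]]]] [k2 [b2 [Hb2 [E2 R2]]]]]]]]].
  { intros t _. destruct (conjg_layer (Z.of_nat t)) as [k [b [Hb E]]].
    exists (Z.to_nat (k mod m)). pose proof (Z.mod_pos_bound k m ltac:(lia)). split; [lia|eauto]. }
  assert (Emod : k1 mod m = k2 mod m).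
  { apply Z2Nat.inj; try apply Z.mod_pos_bound; lia. }
  set (q := k2 / m - k1 / m).
  assert (Ek : k2 = k1 + m * q).
  { unfold q. pose proof (Z.div_mod k1 m ltac:(lia)). pose proof (Z.div_mod k2 m ltac:(lia)). lia. }
  set (b0 := inv b1 ** (gpow (gpow c m) q ** b2)).
  assert (Hb0 : B b0) by (apply BM; auto; apply BM; auto; apply subgroup_gpow; auto).
  apply (commute_of_conj_shift h c b0 (Z.of_nat t2 - Z.of_nat t1)); auto; [lia|].
  assert (E3 : conjg (gpow h (Z.of_nat t2)) c = conjg (gpow h (Z.of_nat t1)) c ** b0).
  { rewrite E2, E1. unfold b0. rewrite <- (mulgA (gpow c k1) b1), mulKVg, Ek, gpowD, gpowM, mulgA. auto. }
  apply (f_equal (conjg (gpow h (- Z.of_nat t1)))) in E3.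
  rewrite conjg_gpowD, conjgM, conjg_gpowD, Z.add_opp_diag_r, gpow0, conj1g, (conjg_layer_fix _ b0 Hb0) in E3.
  rewrite <- E3. f_equal.
Qed.

(* h induces an automorphism of the infinite cyclic group <c>B/B, i.e. acts on it by +-1. *)
Lemma layer_commute_torsionfree : torsionfree_mod B c ->
  exists e, e > 0 /\ commute (gpow h e) c.
Proof.
  intros NP. pose proof B_subgroup as [_ [BM _]].
  destruct (conjg_layer 1%Z) as [k [b [Hb Eb]]].
  destruct (conjg_layer (-1)%Z) as [k' [b' [Hb' Eb']]].
  rewrite gpow1 in Eb. change (-1) with (- (1)) in Eb'. rewrite gpowN, gpow1 in Eb'.
  assert (Ec : c = gpow c (k * k') ** (gpow b k' ** b')).
  { rewrite <- (conjgKV h c) at 1.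
    rewrite Eb', conjgM, conjg_gpow, Eb, conjg_layer_fix1 by auto.
    rewrite gpowMn by (apply commute_gpowl; auto). rewrite <- gpowM, mulgA. auto. }
  assert (Ekk : k * k' = 1%Z).
  { apply NNPP. intro Hne. apply (NP (- (k * k') + 1)); [lia|].
    rewrite gpowD, gpowN, gpow1. rewrite Ec at 2. rewrite mulKg.
    apply BM; auto. apply subgroup_gpow; auto. }
  destruct (Z.eq_mul_1 k k' Ekk) as [K1|K1]; subst k.
  - apply (commute_of_conj_shift h c b 1); auto; [lia|]. rewrite gpow1, Eb, gpow1. auto.
  - exists 2. split; [lia|]. apply conjg_fixP.
    rewrite gpow2, conjg_mul, Eb, conjgM, conjg_gpow, Eb, conjg_layer_fix1 by auto.
    change (-1) with (- (1)). rewrite !gpowN, !gpow1, invMg, invgK, <- mulgA.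
    rewrite (c_centralizes_B b Hb), mulKg. auto.
Qed.

Lemma layer_commute : exists e, e > 0 /\ commute (gpow h e) c.
Proof.
  destruct (classic (exists m, m > 0 /\ B (gpow c m))) as [[m [Hm Hcm]]|NoPow].
  - apply (layer_commute_torsion m); auto.
  - apply layer_commute_torsionfree, torsionfree_modP; auto.
Qed.
End Cyclic_layer.

Lemma series_power_centralizes S N g : series S N ->
  (forall i k x, (i <= N)%nat -> S i x -> S i (conjg (gpow g k) x)) ->
  abelian_on (S N) \/ finite_set (S N) ->
  exists d, d > 0 /\ forall x, S N x -> commute (gpow g d) x.
Proof.
  intros Ser Hn Hab. pose proof Ser as [S0 [Ssub [_ Sfac]]].
  enough (H : forall j, (j <= N)%nat -> exists d, d > 0 /\ forall x, S j x -> commute (gpow g d) x)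
    by auto.
  induction j as [|j IH]; intro Hj.
  { exists 1%Z. split; [lia|]. intros x Hx. apply S0 in Hx. subst. apply commute1. }
  destruct IH as [d [Hd Hcd]]; [lia|].
  destruct (Sfac j ltac:(lia)) as [Sinc [c [Hc Gen]]].
  set (h := gpow g d).
  assert (SjN : forall i x, (i <= N)%nat -> S i x -> S N x) by (intros; apply (series_incr S N i N); auto; lia).
  assert (Hconj : forall t, S (Datatypes.S j) (conjg (gpow h t) c)).
  { intro t. unfold h. rewrite <- gpowM. apply Hn; auto. }
  assert (Layer : exists e, e > 0 /\ commute (gpow h e) c).
  { destruct Hab as [Hab|[L HL]].
    - apply (layer_commute (S j)); [apply Ssub; lia|auto| |].
      + intros b Hb. apply Hab; [apply (SjN (Datatypes.S j)) | apply (SjN j)]; auto; lia.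
      + intro t. apply Gen, Hconj.
    - apply (conj_orbit_finite_commute h c L). intro t. apply HL, (SjN (Datatypes.S j)); auto. }
  destruct Layer as [e [He Ce]]. exists (d * e). split; [nia|].
  intros x Hx. destruct (Gen x Hx) as [k [a [Ha ->]]].
  rewrite gpowM. apply commute_mulr; [apply commute_gpowr; auto|].
  apply commute_gpowl. apply Hcd; auto.
Qed.

Section Cyclic_extension.
Variables (A : G -> Prop) (psi : G -> Z) (h c : G) (m d : Z).
Hypothesis A_subgroup : is_subgroup A.
Hypothesis A_abelian : abelian_on A.
Hypothesis h_normalizes_A : forall t x, A x -> A (conjg (gpow h t) x).
Hypothesis psi_hom : hom_Z A psi.
Hypothesis psi_conjg_h : forall x, A x -> psi (conjg h x) = psi x.
Hypothesis m_pos : m > 0.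
Hypothesis hm_in_A : A (gpow h m).
Hypothesis d_pos : d > 0.
Hypothesis hd_centralizes_A : forall x, A x -> commute (gpow h d) x.
Hypothesis c_in_A : A c.
Hypothesis psi_c : psi c <> 0.

Definition cyclic_ext (x : G) : Prop := exists k a, A a /\ x = gpow h k ** a.

Lemma cyclic_ext_subgroup : is_subgroup cyclic_ext.
Proof.
  pose proof A_subgroup as [A1 [AM AV]]. split; [|split].
  - exists 0, 1. split; auto. rewrite gpow0, mul1g. auto.
  - intros x y [k [a [Ha ->]]] [l [b [Hb ->]]]. rewrite mulg_gpow_conj.
    exists (k + l), (conjg (gpow h l) a ** b). split; auto.
  - intros x [k [a [Ha ->]]]. exists (- k), (conjg (gpow h (- k)) (inv a)). split; auto.
    rewrite invMg, mul_conjg, gpowN. auto.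
Qed.

Lemma psi_conjg_gpow t x : A x -> psi (conjg (gpow h t) x) = psi x.
Proof.
  assert (Ah : forall x, A x -> A (conjg h x)) by (intros; rewrite <- (gpow1 h); auto).
  assert (Ah' : forall x, A x -> A (conjg (inv h) x))
    by (intros; rewrite <- (gpow1 h), <- gpowN; auto).
  revert x. induction t using Z.peano_ind; intros x Hx.
  - rewrite gpow0, conj1g. auto.
  - rewrite gpow_succ, conjg_mul, IHt, psi_conjg_h; auto.
  - rewrite gpow_pred, conjg_mul, IHt; auto.
    rewrite <- (psi_conjg_h (conjg (inv h) x)), conjgKV; auto.
Qed.

(* The value phi(h^k a) = k psi(h^m) + m psi(a), i.e. m times the would-be extension of psi. *)
Lemma cyclic_ext_value_unique k a k' a' : A a -> A a' -> gpow h k ** a = gpow h k' ** a' ->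
  k * psi (gpow h m) + m * psi a = k' * psi (gpow h m) + m * psi a'.
Proof.
  intros Ha Ha' E. pose proof A_subgroup as [_ [AM AV]].
  assert (Ey : gpow h (- k' + k) = a' ** inv a).
  { rewrite gpowD, gpowN. apply (mulIg a). rewrite mulgKV, <- mulgA, E, mulKg. auto. }
  assert (Ay : A (gpow h (- k' + k))) by (rewrite Ey; auto).
  pose proof (hom_Z_gpow A psi (gpow h (- k' + k)) m A_subgroup psi_hom Ay) as E1.
  rewrite <- gpowM, Z.mul_comm, gpowM, (hom_Z_gpow A psi (gpow h m) (- k' + k)) in E1; auto.
  rewrite Ey, psi_hom, (hom_Z_inv A) in E1; auto. nia.
Qed.

Definition ext_hom (x : G) : Z := epsilon (inhabits 0)
  (fun v => exists k a, A a /\ x = gpow h k ** a /\ v = k * psi (gpow h m) + m * psi a).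

Lemma ext_hom_eq k a : A a -> ext_hom (gpow h k ** a) = k * psi (gpow h m) + m * psi a.
Proof.
  intros Ha. unfold ext_hom.
  destruct (epsilon_spec (inhabits 0) (fun v => exists k0 a0, A a0 /\ gpow h k ** a = gpow h k0 ** a0 /\
      v = k0 * psi (gpow h m) + m * psi a0)) as [k0 [a0 [Ha0 [E0 V0]]]];
    [exists (k * psi (gpow h m) + m * psi a), k, a; auto|].
  rewrite V0. symmetry. apply cyclic_ext_value_unique; auto.
Qed.

Lemma ext_hom_hom : hom_Z cyclic_ext ext_hom.
Proof.
  pose proof A_subgroup as [_ [AM _]].
  intros x y [k [a [Ha ->]]] [l [b [Hb ->]]].
  rewrite mulg_gpow_conj, !ext_hom_eq, psi_hom, psi_conjg_gpow; auto. ring.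
Qed.

Fixpoint conj_norm (t : nat) : G :=
  match t with O => 1 | S t => conj_norm t ** conjg (gpow h (Z.of_nat t)) c end.

Lemma conj_norm_in_A t : A (conj_norm t).
Proof. pose proof A_subgroup as [A1 [AM _]]. induction t; simpl; auto. Qed.

Lemma psi_conj_norm t : psi (conj_norm t) = Z.of_nat t * psi c.
Proof.
  induction t; simpl conj_norm.
  - apply (hom_Z_1 A); auto.
  - rewrite psi_hom, IHt, psi_conjg_gpow, Nat2Z.inj_succ; auto; [ring|apply conj_norm_in_A].
Qed.

Lemma conjg_conj_norm t : conjg h (conj_norm t) ** c = conj_norm t ** conjg (gpow h (Z.of_nat t)) c.
Proof.
  induction t; simpl conj_norm.
  - change (Z.of_nat 0) with 0. rewrite conjg1, gpow0, conj1g, !mul1g. auto.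
  - rewrite conjgM.
    assert (E : conjg h (conjg (gpow h (Z.of_nat t)) c) = conjg (gpow h (Z.of_nat (S t))) c).
    { rewrite <- conjg_mul, Nat2Z.inj_succ, <- Z.add_1_r, gpowD, gpow1. auto. }
    rewrite E, <- mulgA, (A_abelian (conjg (gpow h (Z.of_nat (S t))) c) c), mulgA, IHt, <- !mulgA; auto.
Qed.

(* The norm z = c c^h ... c^(h^(d-1)) is fixed by h because h^d centralizes A. *)
Lemma conj_norm_central x : cyclic_ext x -> commute (conj_norm (Z.to_nat d)) x.
Proof.
  set (z := conj_norm (Z.to_nat d)).
  assert (Chz : commute h z).
  { apply conjg_fixP, (mulIg c). unfold z. rewrite conjg_conj_norm, Z2Nat.id by lia.
    f_equal. apply conjg_fixP. auto. }
  intros [k [a [Ha ->]]]. apply commute_mulr.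
  - apply commute_sym, commute_gpowl, Chz.
  - apply A_abelian; auto. apply conj_norm_in_A.
Qed.

Lemma cyclic_ext_abelian : abelian_on cyclic_ext.
Proof.
  apply (abelian_of_central_hom_Z cyclic_ext ext_hom (conj_norm (Z.to_nat d)));
    auto using cyclic_ext_subgroup, ext_hom_hom, conj_norm_central.
  - exists 0, (conj_norm (Z.to_nat d)). split; [apply conj_norm_in_A|]. rewrite gpow0, mul1g. auto.
  - rewrite <- (mul1g (conj_norm _)), <- (gpow0 h), ext_hom_eq by apply conj_norm_in_A.
    rewrite psi_conj_norm, Z2Nat.id by lia. nia.
Qed.
End Cyclic_extension.

Section Series_step.
Variables (S : nat -> G -> Prop) (n : nat) (g : G).
Hypothesis S_series : series S (Datatypes.S n).
Hypothesis g_in_top : S (Datatypes.S n) g.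
Hypothesis g_generates : generates_mod (S (Datatypes.S n)) (S n) g.

Lemma step_subgroup i : (i <= Datatypes.S n)%nat -> is_subgroup (S i).
Proof. apply S_series. Qed.

Lemma step_incr i x : (i <= Datatypes.S n)%nat -> S i x -> S (Datatypes.S n) x.
Proof. intros Hi. apply (series_incr S (Datatypes.S n) i (Datatypes.S n)); auto. Qed.

Lemma step_normal i k x : (i <= Datatypes.S n)%nat -> S i x -> S i (conjg (gpow g k) x).
Proof. intros Hi Hx. apply S_series; auto. apply subgroup_gpow; auto. apply step_subgroup; lia. Qed.

Lemma step_power_centralizes : abelian_on (S n) \/ finite_set (S n) ->
  exists d, d > 0 /\ forall x, S n x -> commute (gpow g d) x.
Proof.
  intros Hab. apply (series_power_centralizes S n g); auto.
  - apply series_restrict; auto.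
  - intros; apply step_normal; auto.
Qed.

Lemma series_step_torsionfree : torsionfree_mod (S n) g -> abelian_on (S n) \/ finite_set (S n) ->
  abelian_on (S (Datatypes.S n)).
Proof.
  intros Hg Hab. destruct (step_power_centralizes Hab) as [d [Hd Hcd]].
  assert (Sn : is_subgroup (S n)) by (apply step_subgroup; lia).
  pose proof Sn as [S1 _].
  apply (abelian_of_central_hom_Z _ (coset_exponent (S n) g) (gpow g d)).
  - apply step_subgroup; lia.
  - apply coset_exponent_hom; auto. intros; apply step_normal; auto.
  - apply subgroup_gpow; auto. apply step_subgroup; lia.
  - intros x Hx. destruct (g_generates x Hx) as [k [a [Ha ->]]].
    apply commute_mulr; [apply gpowC|auto].
  - rewrite <- (mulg1 (gpow g d)), coset_exponent_eq; auto. lia.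
Qed.

Lemma layer_hom_conjg_sign : abelian_on (S n) -> ~ finite_set (S n) ->
  exists psi c e, hom_Z (S n) psi /\ S n c /\ psi c <> 0 /\ (e = 1%Z \/ e = -1) /\
    forall x, S n x -> psi (conjg g x) = e * psi x.
Proof.
  intros Hab Hinf. pose proof S_series as [_ [Ssub [Snorm _]]].
  destruct (infinite_cyclic_layer S n (series_restrict S n S_series) Hab Hinf)
    as [j [c [M [Hj [Hc [Gen [Tf [HM HxM]]]]]]]].
  assert (Sj : is_subgroup (S j)) by (apply Ssub; lia).
  assert (Sj1 : is_subgroup (S (Datatypes.S j))) by (apply Ssub; lia).
  assert (Inc : forall i x, (i <= n)%nat -> S i x -> S n x)
    by (intros; apply (series_incr S (Datatypes.S n) i n); auto; lia).
  set (psi0 := coset_exponent (S j) c).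
  assert (Psi0hom : hom_Z (S (Datatypes.S j)) psi0).
  { apply coset_exponent_hom; auto. intros l b Hb. apply Snorm; [lia| |auto].
    apply (step_incr (Datatypes.S j)); [lia|]. apply subgroup_gpow; auto. }
  assert (Scale : forall q, S (Datatypes.S n) q ->
            exists e, forall y, S (Datatypes.S j) y -> psi0 (conjg q y) = e * psi0 y).
  { intros q Hq. apply coset_exponent_conjg_scale; auto; try (intros; apply Snorm; auto; lia).
    intros b Hb. apply Hab; [apply (Inc (Datatypes.S j))|apply (Inc j)]; auto; lia. }
  assert (Psi0c : psi0 c = 1%Z).
  { unfold psi0. rewrite <- (gpow1 c) at 2. rewrite <- (mulg1 (gpow c 1)), coset_exponent_eq; auto.
    apply Sj. }
  destruct (Scale g g_in_top) as [e He].
  destruct (Scale (inv g)) as [e' He']; [apply (step_subgroup (Datatypes.S n)); auto|].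
  exists (fun x => psi0 (gpow x M)), c, e.
  split; [|split; [apply (Inc (Datatypes.S j)); auto; lia|split; [|split]]].
  - intros x y Hx Hy. rewrite gpowMn by auto. apply Psi0hom; auto.
  - rewrite (hom_Z_gpow _ psi0 c M Sj1 Psi0hom Hc), Psi0c. lia.
  - assert (E : psi0 c = e * (e' * psi0 c)).
    { rewrite <- He', <- He, conjgKV; auto. apply Snorm; auto; apply (step_subgroup (Datatypes.S n)); auto. }
    rewrite Psi0c in E. apply (Z.eq_mul_1 e e'). lia.
  - intros x Hx. rewrite <- conjg_gpow. apply He. auto.
Qed.

(* If g inverts the infinite cyclic layer, then g^2 centralizes c, and g inverts c (c^g)^-1. *)
Lemma series_step_torsion m : m > 0 -> S n (gpow g m) -> abelian_on (S n) -> ~ finite_set (S n) ->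
  abelian_on (S (Datatypes.S n)).
Proof.
  intros Hm Hgm Hab Hinf.
  assert (Sn : is_subgroup (S n)) by (apply step_subgroup; lia).
  pose proof Sn as [_ [SM SV]].
  destruct (step_power_centralizes (or_introl Hab)) as [d [Hd Hcd]].
  destruct (layer_hom_conjg_sign Hab Hinf) as [psi [c [e [Hpsi [Hc [Hpc [[-> | ->] Hconj]]]]]]].
  - intros x y Hx Hy. apply (cyclic_ext_abelian (S n) psi g c m d); auto;
      [intros; apply step_normal; auto|intros; rewrite Hconj; auto; lia|apply g_generates..]; auto.
  - exfalso. set (h := gpow g 2).
    assert (Hh : forall t, gpow h t = gpow (gpow g t) 2) by (intro; unfold h; rewrite <- !gpowM, Z.mul_comm; auto).
    assert (C2 : commute h c).
    { apply (cyclic_ext_abelian (S n) psi h c m d); auto.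
      - intros t x Hx. unfold h. rewrite <- gpowM. apply step_normal; auto.
      - intros x Hx. unfold h. rewrite gpow2, conjg_mul, !Hconj; auto; [lia|]. apply step_normal with (k := 1%Z) in Hx; auto.
        rewrite gpow1 in Hx. auto.
      - rewrite Hh. apply subgroup_gpow; auto.
      - intros x Hx. rewrite Hh. apply commute_gpowl. auto.
      - exists 1%Z, 1. split; [apply Sn|]. rewrite gpow1, mulg1. auto.
      - exists 0, c. split; auto. rewrite gpow0, mul1g. auto. }
    assert (Sgc : S n (conjg g c)) by (rewrite <- (gpow1 g); apply step_normal; auto).
    apply (inverting_conjugation_absurd g (c ** inv (conjg g c))).
    + intro Ew. assert (E : psi (c ** inv (conjg g c)) = 0) by (rewrite Ew; apply (hom_Z_1 (S n)); auto).
      rewrite Hpsi, (hom_Z_inv (S n)), Hconj in E; auto. lia.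
    + assert (Cgg : conjg g (conjg g c) = c) by (rewrite <- conjg_mul, <- gpow2; apply conjg_fixP, C2).
      rewrite conjgM, conjgV, Cgg, invMg, invgK. reflexivity.
Qed.
End Series_step.

Lemma series_infinite_abelian n : forall S, series S n -> ~ finite_set (S n) -> abelian_on (S n).
Proof.
  induction n as [|n IH]; intros S Ser Hinf.
  { exfalso. apply Hinf, series_base_finite, Ser. }
  pose proof Ser as [_ [Ssub [_ Sfac]]].
  destruct (Sfac n ltac:(lia)) as [_ [g [Hg Gen]]].
  assert (Sn : is_subgroup (S n)) by (apply Ssub; lia).
  pose proof (IH S (series_restrict S n Ser)) as IHS.
  destruct (classic (exists m, m > 0 /\ S n (gpow g m))) as [[m [Hm Hgm]]|NoPow].
  - assert (Inf : ~ finite_set (S n)).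
    { intro F. apply Hinf. apply (finite_cyclic_extension (S n) _ g m); auto. }
    apply (series_step_torsion S n g Ser Hg Gen m); auto.
  - apply (series_step_torsionfree S n g Ser Hg Gen); [apply torsionfree_modP; auto|].
    destruct (classic (finite_set (S n))); auto.
Qed.
End Centralizer_condition.
End Groups.

Theorem theorem4p1 (G : group) :
  infinite_group G -> supersoluble G -> no_involutions G ->
  (forall H : G -> Prop, nonabelian_subgroup H -> centralizer_in H) ->
  abelian_group G.
Proof.
  intros Hinf [n [S [S0 [Sall [Snorm Sfac]]]]] NI SC.
  assert (Ser : series G S n).
  { split; [auto|split; [|split]]; auto.
    - intros i Hi. apply (Snorm i Hi).
    - intros i Hi p x _ Hx. apply (Snorm i Hi). auto. }
  assert (Hfin : ~ finite_set G (S n)).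
  { intros [l Hl]. apply Hinf. exists l. intros x. apply Hl, Sall. }
  intros x y. apply (series_infinite_abelian G NI SC n S Ser Hfin); apply Sall.
Qed.
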